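(* Let $\hat x\in\mathbb{R}^{n_1}$ and let (P$'$), (S1$'$), (S2), (S2$'$) be as defined in the context, and assume $d=c_y$ and that (S1$'$) and (S2$'$) are feasible. Then (P$'$) can be solved by solving (S1$'$) and (S2$'$) independently, as follows. Let $\mathfrak O$ be the optimal value of (S1$'$) if finite and $\mathfrak O=+\infty$ otherwise. Then: (S2) is unbounded if either (S2$'$) is unbounded (with an unbounded ray $(\tilde\psi,\tilde u_y)$, in which case $(\tilde\psi,\tilde u_y,0)$ is an unbounded ray of (S2)) or (S2$'$) has a finite optimum $\mathfrak O_2$ at $(\hat\psi,\hat u_y)$ with $\mathfrak O_2>\mathfrak O$ (in which case $(\hat\psi,\hat u_y,1)$ is an unbounded ray of (S2)); and if (S2$'$) has a finite optimum $\mathfrak O_2\le\mathfrak O$ at $(\hat\psi,\hat u_y)$, then $(\hat\psi,\hat u_y,0)$ is optimal for (S2) with value $\mathfrak O_2$. Consequently (P$'$) is unbounded if and only if (S1$'$) is unbounded, or (S2$'$) is unbounded, or the optimal value of (S2$'$) exceeds $\mathfrak O$; otherwise the optimal value of (P$'$) equals the optimal value of (S2$'$), attained at $(\psi,u_y,w,y,u_\psi,v)=(\hat\psi,\hat u_y,0,0,0,0)$.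
   Context: Data: $A\in\mathbb{R}^{m\times n_1}$, $B\in\mathbb{R}^{m\times n_2}$, $b\in\mathbb{R}^m$, $c_y,d\in\mathbb{R}^{n_2}$, $G_{xy}\in\mathbb{R}^{p\times n_1}$, $G_y\in\mathbb{R}^{p\times n_2}$, $h_y\in\mathbb{R}^p$, $G_{x\psi}\in\mathbb{R}^{\ell\times n_1}$, $G_\psi\in\mathbb{R}^{\ell\times m}$, $h_\psi\in\mathbb{R}^\ell$, $K_\psi\in\mathbb{R}^{q\times m}$, $K_s\in\mathbb{R}^{q\times r}$, $K_x\in\mathbb{R}^{q\times n_1}$, $k\in\mathbb{R}^q$ (the $K$'s, $k$ come from a McCormick linearization in a strong-duality reformulation of a bilevel program with lower level $\min_{y\ge0}\{d^Ty:Ax+By\ge b\}$, whose upper level additionally imposes $G_{x\psi}x+G_\psi\psi\ge h_\psi$ on the lower-level dual $\psi$). $\mathbf 1$ is the all-ones vector. (P$'$) (Benders subproblem, dual of $\min c_y^Ty$ s.t. $G_yy\ge h_y-G_{xy}\hat x$, $By\ge b-A\hat x$, $-B^T\psi\ge-d$, $-d^Ty+\psi^Tb-s^T\mathbf 1\ge 0$, $K_\psi\psi+K_ss\ge k+K_x\hat x$, $G_\psi\psi\ge h_\psi-G_{x\psi}\hat x$, $y,\psi,s\ge0$): maximize $\psi^T(b-A\hat x)+u_y^T(h_y-G_{xy}\hat x)+u_\psi^T(h_\psi-G_{x\psi}\hat x)-[d^Ty-v^T(k+K_x\hat x)]$ subject to $By-G_\psi^Tu_\psi-K_\psi^Tv\ge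 bw$, $B^T\psi+G_y^Tu_y\le dw+c_y$, $K_s^Tv\le\mathbf 1 w$, $\psi,u_y,u_\psi,w,y,v\ge0$. (S1$'$): minimize $d^Ty-u_\psi^T(h_\psi-G_{x\psi}\hat x)-v^T(k+K_x\hat x)$ subject to $By-G_\psi^Tu_\psi-K_\psi^Tv\ge b$, $K_s^Tv\le\mathbf 1$, $y,u_\psi,v\ge0$. (S2): maximize $\psi^T(b-A\hat x)+u_y^T(h_y-G_{xy}\hat x)-\mathfrak O w$ subject to $B^T\psi+G_y^Tu_y\le dw+c_y$, $\psi,u_y,w\ge0$ (with $w$ fixed at $0$ if $\mathfrak O=+\infty$). (S2$'$): (S2) with $w$ fixed at $0$, i.e., maximize $\psi^T(b-A\hat x)+u_y^T(h_y-G_{xy}\hat x)$ s.t. $B^T\psi+G_y^Tu_y\le c_y$, $\psi,u_y\ge0$. *)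

From mathcomp Require Import all_boot all_order all_algebra.
Set Implicit Arguments. Unset Strict Implicit. Unset Printing Implicit Defensive.
Import Order.TTheory GRing.Theory Num.Theory.
Local Open Scope ring_scope.

Section Defs.
Variable R : realFieldType.

Definition dotv (k : nat) (u v : 'cV[R]_k) : R := \sum_(i < k) u i 0 * v i 0.

Definition lev (k : nat) (u v : 'cV[R]_k) : Prop := forall i, u i 0 <= v i 0.
Definition nonneg (k : nat) (u : 'cV[R]_k) : Prop := lev 0 u.

Definition ones (k : nat) : 'cV[R]_k := const_mx 1.

Definition optimal_max (X : Type) (F : X -> Prop) (f : X -> R) (x : X) : Prop :=
  F x /\ forall x', F x' -> f x' <= f x.
Definition optimal_min (X : Type) (F : X -> Prop) (f : X -> R) (x : X) : Prop :=
  F x /\ forall x', F x' -> f x <= f x'.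
Definition unbounded_max (X : Type) (F : X -> Prop) (f : X -> R) : Prop :=
  forall M : R, exists x, F x /\ M < f x.
Definition unbounded_min (X : Type) (F : X -> Prop) (f : X -> R) : Prop :=
  forall M : R, exists x, F x /\ f x < M.
Definition feasible (X : Type) (F : X -> Prop) : Prop := exists x, F x.
Definition opt_value_min (X : Type) (F : X -> Prop) (f : X -> R) (o : R) : Prop :=
  exists x, optimal_min F f x /\ f x = o.
Definition opt_value_max (X : Type) (F : X -> Prop) (f : X -> R) (o : R) : Prop :=
  exists x, optimal_max F f x /\ f x = o.

(** Extended value O in R ∪ {+oo}, encoded as [option R] with [None] = +oo. *)
Definition ext_gt (a : R) (O : option R) : Prop :=
  match O with Some o => o < a | None => False end.

Record LPdata (m n1 n2 p l q r : nat) := {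
  A : 'M[R]_(m, n1); B : 'M[R]_(m, n2); b : 'cV[R]_m;
  cy : 'cV[R]_n2; d : 'cV[R]_n2;
  Gxy : 'M[R]_(p, n1); Gy : 'M[R]_(p, n2); hy : 'cV[R]_p;
  Gxpsi : 'M[R]_(l, n1); Gpsi : 'M[R]_(l, m); hpsi : 'cV[R]_l;
  Kpsi : 'M[R]_(q, m); Ks : 'M[R]_(q, r); Kx : 'M[R]_(q, n1); k : 'cV[R]_q }.

Variables (m n1 n2 p l q r : nat) (D : LPdata m n1 n2 p l q r) (xh : 'cV[R]_n1).

Definition Pvar := ('cV[R]_m * 'cV[R]_p * R * 'cV[R]_n2 * 'cV[R]_l * 'cV[R]_q)%type.

Definition P_feas (z : Pvar) : Prop :=
  let: (psi, uy, w, y, upsi, v) := z in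
  [/\ nonneg psi, nonneg uy, 0 <= w, nonneg y & nonneg upsi /\ nonneg v] /\
  [/\ lev (w *: b D) (B D *m y - (Gpsi D)^T *m upsi - (Kpsi D)^T *m v),
      lev ((B D)^T *m psi + (Gy D)^T *m uy) (w *: d D + cy D)
    & lev ((Ks D)^T *m v) (w *: ones r)].

Definition P_obj (z : Pvar) : R :=
  let: (psi, uy, w, y, upsi, v) := z in
  dotv psi (b D - A D *m xh) + dotv uy (hy D - Gxy D *m xh)
  + dotv upsi (hpsi D - Gxpsi D *m xh)
  - (dotv (d D) y - dotv v (k D + Kx D *m xh)).

Definition S1var := ('cV[R]_n2 * 'cV[R]_l * 'cV[R]_q)%type.

Definition S1_feas (z : S1var) : Prop :=
  let: (y, upsi, v) := z in
  [/\ nonneg y, nonneg upsi, nonneg v,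
      lev (b D) (B D *m y - (Gpsi D)^T *m upsi - (Kpsi D)^T *m v)
    & lev ((Ks D)^T *m v) (ones r)].

Definition S1_obj (z : S1var) : R :=
  let: (y, upsi, v) := z in
  dotv (d D) y - dotv upsi (hpsi D - Gxpsi D *m xh) - dotv v (k D + Kx D *m xh).

Definition S2var := ('cV[R]_m * 'cV[R]_p * R)%type.

Definition S2_feas (O : option R) (z : S2var) : Prop :=
  let: (psi, uy, w) := z in
  [/\ nonneg psi, nonneg uy, 0 <= w, (O = None -> w = 0)
    & lev ((B D)^T *m psi + (Gy D)^T *m uy) (w *: d D + cy D)].

Definition S2_obj (O : option R) (z : S2var) : R :=
  let: (psi, uy, w) := z in
  dotv psi (b D - A D *m xh) + dotv uy (hy D - Gxy D *m xh)
  - (if O is Some o then o * w else 0).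

(** Unbounded ray of (S2): a recession direction of its feasible set along
    which the (linear) objective strictly increases. *)
Definition S2_ray (O : option R) (z : S2var) : Prop :=
  let: (psi, uy, w) := z in
  [/\ nonneg psi, nonneg uy, 0 <= w, (O = None -> w = 0)
    & lev ((B D)^T *m psi + (Gy D)^T *m uy) (w *: d D)] /\ 0 < S2_obj O z.

Definition S2'var := ('cV[R]_m * 'cV[R]_p)%type.

Definition S2'_feas (z : S2'var) : Prop :=
  let: (psi, uy) := z in
  [/\ nonneg psi, nonneg uy & lev ((B D)^T *m psi + (Gy D)^T *m uy) (cy D)].

Definition S2'_obj (z : S2'var) : R :=
  let: (psi, uy) := z in
  dotv psi (b D - A D *m xh) + dotv uy (hy D - Gxy D *m xh).

Definition S2'_ray (z : S2'var) : Prop :=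
  let: (psi, uy) := z in
  [/\ nonneg psi, nonneg uy, lev ((B D)^T *m psi + (Gy D)^T *m uy) 0
    & 0 < S2'_obj z].

End Defs.

From mathcomp Require Import all_boot all_order all_algebra.
From mathcomp Require Import lra.
From Stdlib Require Import Classical.
Set Implicit Arguments. Unset Strict Implicit. Unset Printing Implicit Defensive.
Import Order.TTheory GRing.Theory Num.Theory.
Local Open Scope ring_scope.

(* With [d = c_y], a feasible point of (P') consists of a point of the
   homogenized feasible set of (S2') at level [w + 1], the scalar [w], and a
   point of the homogenized feasible set of (S1') at level [w]; the objective
   of (P') is the objective of (S2') minus that of (S1').  Averaging with an
   optimal point shows that a homogenized point at level [t] has objective at
   most (resp. at least) [t] times the optimal value, so the objective of (P')
   is at most [(w + 1) O2 - w O], hence at most [O2] when [O2 <= O].  When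
   [O2 > O], the points [((1 + s) psi, (1 + s) u_y, s, s y, s u_psi, s v)] built
   from optimal solutions are feasible with objective [O2 + s (O2 - O)], and
   the same half-line without its (S1') part is unbounded for (S2).  Comparing
   [O2] with [O] requires that a feasible bounded linear program attains its
   optimum, which is proved by Fourier-Motzkin elimination. *)

Section FourierMotzkin.
Variable R : realFieldType.

(* [(a, beta)] encodes the inequality [\sum_(i < N) a_i * x_i <= beta] on
   variables [x : nat -> R], coefficients beyond [size a] being zero. *)
Definition ineq := (seq R * R)%type.

Definition dotn N (a : seq R) (x : nat -> R) : R := \sum_(i < N) a`_i * x i.
Definition holds N (x : nat -> R) (c : ineq) : bool := dotn N c.1 x <= c.2.
Definition sat N (S : seq ineq) (x : nat -> R) : bool := all (holds N x) S.

Lemma dotn_ext N a x y : (forall i, (i < N)%N -> x i = y i) ->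
  dotn N a x = dotn N a y.
Proof. by move=> exy; apply: eq_bigr => i _; rewrite exy. Qed.

Lemma sat_ext N S x y : (forall i, (i < N)%N -> x i = y i) ->
  sat N S x = sat N S y.
Proof. by move=> exy; apply: eq_all => c; rewrite /holds (dotn_ext _ exy). Qed.

Lemma dotnS N a x : dotn N.+1 a x = dotn N a x + a`_N * x N.
Proof. by rewrite /dotn big_ord_recr. Qed.

Definition upd (x : nat -> R) N t : nat -> R := fun j => if j == N then t else x j.

Lemma dotn_upd N a x t : dotn N.+1 a (upd x N t) = dotn N a x + a`_N * t.
Proof.
rewrite dotnS /upd eqxx; congr (_ + _); apply: dotn_ext => i ltiN.
by rewrite ifF // ltn_eqF.
Qed.

(* For [p_N > 0 > q_N], the combination [- q_N * p + p_N * q] cancels [x_N]. *)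
Definition fm_comb N (p q : ineq) : ineq :=
  (mkseq (fun j => - q.1`_N * p.1`_j + p.1`_N * q.1`_j) N,
   - q.1`_N * p.2 + p.1`_N * q.2).

Definition fm_elim N (S : seq ineq) : seq ineq :=
  [seq c <- S | c.1`_N == 0] ++
  [seq fm_comb N p q | p <- [seq c <- S | 0 < c.1`_N],
                       q <- [seq c <- S | c.1`_N < 0]].

Lemma dotn_comb N p q x :
  dotn N (fm_comb N p q).1 x = - q.1`_N * dotn N p.1 x + p.1`_N * dotn N q.1 x.
Proof.
rewrite /dotn !mulr_sumr -big_split; apply: eq_bigr => i _.
by rewrite nth_mkseq // mulrDl !mulrA.
Qed.

Lemma fm_elim_sound N S x : sat N.+1 S x -> sat N (fm_elim N S) x.
Proof.
move=> /allP satS; apply/allP => c; rewrite mem_cat => /orP[|/allpairsP].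
  rewrite mem_filter => /andP[/eqP c0 cS]; have := satS c cS.
  by rewrite /holds dotnS c0 mul0r addr0.
move=> [[p q] [/=]]; rewrite !mem_filter => /andP[pos pS] /andP[neg qS] ->.
have := satS p pS; have := satS q qS; rewrite /holds dotn_comb !dotnS /=.
move: (p.1`_N) (q.1`_N) (dotn N p.1 x) (dotn N q.1 x) pos neg => a b dp dq.
nra.
Qed.

Lemma exists_between (ls us : seq R) :
  (forall l u, l \in ls -> u \in us -> l <= u) ->
  exists t, (forall l, l \in ls -> l <= t) /\ (forall u, u \in us -> t <= u).
Proof.
move=> leLU; exists (\big[Order.max/ \big[Order.min/0]_(u <- us) u]_(l <- ls) l).
split=> [l lls|u uus]; first exact: le_bigmax_seq.
rewrite big_seq; apply: bigmax_le => [|l lls]; last exact: leLU.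
exact: ge_bigmin_seq.
Qed.

(* Each lower bound on [x_N] (from [c_N < 0]) lies below each upper bound
   (from [c_N > 0]) because their combination holds. *)
Lemma fm_elim_complete N S x :
  sat N (fm_elim N S) x -> exists t, sat N.+1 S (upd x N t).
Proof.
rewrite /sat all_cat => /andP[/allP sat0 /allP satC].
pose bnd (c : ineq) := (c.2 - dotn N c.1 x) / c.1`_N.
have [t [lowt upt]] : exists t,
    (forall l, l \in map bnd [seq c <- S | c.1`_N < 0] -> l <= t) /\
    (forall u, u \in map bnd [seq c <- S | 0 < c.1`_N] -> t <= u).
  apply: exists_between => _ _ /mapP[q qN ->] /mapP[p pP ->].
  have := satC _ (allpairs_f (fm_comb N) pP qN).
  move: qN pP; rewrite !mem_filter => /andP[neg _] /andP[pos _].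
  rewrite /holds dotn_comb /= /bnd ler_pdivlMr // mulrAC ler_ndivrMr //.
  lra.
exists t; apply/allP => c cS; rewrite /holds dotn_upd.
case: (ltrgtP (c.1`_N) 0) => [neg|pos|c0]; last first.
- by rewrite c0 mul0r addr0; apply: sat0; rewrite mem_filter c0 eqxx.
- have := upt (bnd c) (map_f bnd _); rewrite mem_filter pos cS ler_pdivlMr //.
  move=> /(_ isT); lra.
- have := lowt (bnd c) (map_f bnd _); rewrite mem_filter neg cS ler_ndivrMr //.
  move=> /(_ isT); lra.
Qed.

Lemma fm_project d N S : exists S', forall x, sat N S' x <->
  exists y, (forall j, (j < N)%N -> y j = x j) /\ sat (N + d) S y.
Proof.
elim: d S => [|d IHd] S.
  exists S => x; rewrite addn0; split=> [satx|[y [exy]]]; first by exists x.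
  by rewrite (sat_ext _ exy).
have [S' HS'] := IHd (fm_elim (N + d) S); exists S' => x; rewrite HS'.
split=> [[y [exy /fm_elim_complete[t satt]]]|[y [exy saty]]].
  exists (upd y (N + d) t); split; last by rewrite addnS.
  move=> j ltjN; rewrite /upd ifF ?exy //; apply/negbTE.
  by rewrite neq_ltn (leq_trans ltjN) ?leq_addr.
by exists y; split=> //; apply: fm_elim_sound; rewrite -addnS.
Qed.

Lemma dotn1 a t : dotn 1 a (fun=> t) = a`_0 * t.
Proof. by rewrite /dotn big_ord1. Qed.

(* The minimum is the largest bound [beta / a] of the inequalities with
   [a < 0]; without such inequalities the set would be unbounded below. *)
Lemma sat1_min (S : seq ineq) t0 M :
  sat 1 S (fun=> t0) -> (forall t, sat 1 S (fun=> t) -> M <= t) ->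
  exists2 ts, sat 1 S (fun=> ts) & forall t, sat 1 S (fun=> t) -> ts <= t.
Proof.
move=> /allP sat_t0 geM.
pose low := [seq c <- S | c.1`_0 < 0].
pose bnd (c : ineq) := c.2 / c.1`_0.
have holds_low c t : c \in low -> holds 1 (fun=> t) c = (bnd c <= t).
  by rewrite mem_filter /holds dotn1 => /andP[neg _]; rewrite ler_ndivrMr // mulrC.
have holds_antitone c t : c \in S -> 0 <= c.1`_0 -> t <= t0 -> holds 1 (fun=> t) c.
  move=> cS pos le_t; apply: le_trans (sat_t0 c cS); rewrite /holds !dotn1.
  exact: ler_wpM2l.
case Elow: low => [|c0 cs].
  suff /geM : sat 1 S (fun=> Num.min t0 (M - 1)) by rewrite le_min => /andP[_]; lra.
  apply/allP => c cS; apply: holds_antitone; rewrite ?ge_min ?lexx //.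
  rewrite leNgt; apply/negP => neg.
  by have := mem_filter (fun c : ineq => c.1`_0 < 0) c S; rewrite -/low Elow neg cS.
have c0low : c0 \in low by rewrite Elow mem_head.
have lowS : {subset low <= S} by move=> c; rewrite mem_filter => /andP[].
pose ts := \big[Order.max/bnd c0]_(c <- low) bnd c.
have ts_min t : sat 1 S (fun=> t) -> ts <= t.
  move=> /allP satt; rewrite /ts big_seq.
  by apply: bigmax_le => [|c clow]; rewrite -holds_low //; apply/satt/lowS.
exists ts => //; apply/allP => c cS.
case: (ltP (c.1`_0) 0) => [neg|pos].
  have clow : c \in low by rewrite mem_filter neg.
  by rewrite holds_low //; apply: le_bigmax_seq.
by apply: holds_antitone => //; apply: ts_min; apply/allP.
Qed.

Definition scons (t : R) (x : nat -> R) : nat -> R :=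
  fun j => if j is j'.+1 then x j' else t.

Lemma dotn_scons N a0 a t x :
  dotn N.+1 (a0 :: a) (scons t x) = a0 * t + dotn N a x.
Proof. by rewrite /dotn big_ord_recl. Qed.

(* The least element of the projection of [{(t, x) | x in S, c.x <= t}] onto
   [t] is the optimal value. *)
Lemma fm_lp_attain N (S : seq ineq) (c : seq R) x0 M :
  sat N S x0 -> (forall x, sat N S x -> M <= dotn N c x) ->
  exists2 xs, sat N S xs & forall x, sat N S x -> dotn N c xs <= dotn N c x.
Proof.
move=> satx0 geM.
pose T := (-1 :: c, 0) :: [seq (0 :: c'.1, c'.2) | c' <- S].
have satT t x : sat N.+1 T (scons t x) = (dotn N c x <= t) && sat N S x.
  rewrite /sat /= all_map /holds /= dotn_scons mulN1r addrC subr_le0.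
  by congr andb; apply: eq_all => c' /=; rewrite /holds /= dotn_scons mul0r add0r.
have [S' HS'] := fm_project N 1 T.
have epi t : sat 1 S' (fun=> t) <-> exists2 x, sat N S x & dotn N c x <= t.
  rewrite HS' add1n; split=> [[y [ey]]|[x satx le_t]].
    have -> : sat N.+1 T y = sat N.+1 T (scons (y 0%N) (fun j => y j.+1)).
      by apply: sat_ext => -[].
    by rewrite satT -(ey 0%N) // => /andP[le_t satx]; exists (fun j => y j.+1).
  by exists (scons t x); split; [case | rewrite satT le_t].
have [|t|ts] := @sat1_min S' (dotn N c x0) M.
- by apply/epi; exists x0.
- by move=> /epi[x satx]; apply: le_trans; apply: geM.
move=> /epi[xs satxs le_ts] ts_min; exists xs => // x satx.
by apply: le_trans le_ts _; apply: ts_min; apply/epi; exists x.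
Qed.

End FourierMotzkin.

Section MatrixLP.
Variable R : realFieldType.

Definition zext N (u : 'I_N -> R) : nat -> R :=
  fun j => if insub j is Some i then u i else 0.

Lemma zextE N (u : 'I_N -> R) (i : 'I_N) : zext u i = u i.
Proof. by rewrite /zext valK. Qed.

Lemma dotn_zext N (u : 'I_N -> R) x :
  dotn N (mkseq (zext u) N) x = \sum_(i < N) u i * x i.
Proof. by apply: eq_bigr => i _; rewrite nth_mkseq // zextE. Qed.

Theorem lp_attain N K (Q : 'M[R]_(K, N)) (h : 'cV[R]_K) (c : 'cV[R]_N) x0 M :
  lev (Q *m x0) h -> (forall x, lev (Q *m x) h -> M <= dotv c x) ->
  exists2 xs, lev (Q *m xs) h & forall x, lev (Q *m x) h -> dotv c xs <= dotv c x.
Proof.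
pose S := [seq (mkseq (zext (Q k)) N, h k 0) | k <- enum 'I_K].
pose cs := mkseq (zext (fun i => c i 0)) N.
pose col (z : nat -> R) : 'cV[R]_N := \col_i z i.
have colK (x : 'cV[R]_N) : col (zext (fun i => x i 0)) = x.
  by apply/matrixP => i j; rewrite mxE zextE ord1.
have mulmx_col z k : (Q *m col z) k 0 = \sum_(i < N) Q k i * z i.
  by rewrite mxE; apply: eq_bigr => i _; rewrite mxE.
have satS z : sat N S z <-> lev (Q *m col z) h.
  rewrite /sat all_map; split=> [/allP satz k|levz]; last apply/allP => k _.
    by have := satz k (mem_enum _ k); rewrite /holds /= dotn_zext mulmx_col.
  by have := levz k; rewrite /holds /= dotn_zext mulmx_col.
have dotn_col z : dotn N cs z = dotv c (col z).
  by rewrite dotn_zext; apply: eq_bigr => i _; rewrite mxE.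
move=> levx0 geM.
have [|z|zs] := @fm_lp_attain _ N S cs (zext (fun i => x0 i 0)) M.
- by apply/satS; rewrite colK.
- by move=> /satS levz; rewrite dotn_col; apply: geM.
move=> /satS levzs zs_min; exists (col zs) => // x levx.
by rewrite -dotn_col -(colK x) -dotn_col; apply: zs_min; apply/satS; rewrite colK.
Qed.

End MatrixLP.

Section ColumnVectors.
Variable R : realFieldType.

Lemma dotvC k (u v : 'cV[R]_k) : dotv u v = dotv v u.
Proof. by apply: eq_bigr => i _; rewrite mulrC. Qed.

Lemma dotvDl k (u u' v : 'cV[R]_k) : dotv (u + u') v = dotv u v + dotv u' v.
Proof. by rewrite /dotv -big_split; apply: eq_bigr => i _; rewrite mxE mulrDl. Qed.

Lemma dotvDr k (u v v' : 'cV[R]_k) : dotv u (v + v') = dotv u v + dotv u v'.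
Proof. by rewrite !(dotvC u) dotvDl. Qed.

Lemma dotvZl k a (u v : 'cV[R]_k) : dotv (a *: u) v = a * dotv u v.
Proof. by rewrite /dotv mulr_sumr; apply: eq_bigr => i _; rewrite mxE mulrA. Qed.

Lemma dotvZr k a (u v : 'cV[R]_k) : dotv u (a *: v) = a * dotv u v.
Proof. by rewrite !(dotvC u) dotvZl. Qed.

Lemma dotvNl k (u v : 'cV[R]_k) : dotv (- u) v = - dotv u v.
Proof. by rewrite -scaleN1r dotvZl mulN1r. Qed.

Lemma dotv_col k1 k2 (u1 v1 : 'cV[R]_k1) (u2 v2 : 'cV[R]_k2) :
  dotv (col_mx u1 u2) (col_mx v1 v2) = dotv u1 v1 + dotv u2 v2.
Proof.
rewrite /dotv big_split_ord /=; congr (_ + _); apply: eq_bigr => i _;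
  by rewrite ?col_mxEu ?col_mxEd.
Qed.

Lemma lev_col k1 k2 (u1 v1 : 'cV[R]_k1) (u2 v2 : 'cV[R]_k2) :
  lev (col_mx u1 u2) (col_mx v1 v2) <-> lev u1 v1 /\ lev u2 v2.
Proof.
split=> [le12|[le1 le2] i].
  by split=> i; [have := le12 (lshift k2 i) | have := le12 (rshift k1 i)];
    rewrite ?col_mxEu ?col_mxEd.
by rewrite -(splitK i); case: (split i) => j /=; rewrite ?col_mxEu ?col_mxEd.
Qed.

Lemma lev_add k (u u' v v' : 'cV[R]_k) :
  lev u v -> lev u' v' -> lev (u + u') (v + v').
Proof. by move=> le le' i; rewrite !mxE lerD. Qed.

Lemma lev_scale k a (u v : 'cV[R]_k) : 0 <= a -> lev u v -> lev (a *: u) (a *: v).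
Proof. by move=> a0 le i; rewrite !mxE ler_wpM2l. Qed.

Lemma nonneg_add k (u v : 'cV[R]_k) : nonneg u -> nonneg v -> nonneg (u + v).
Proof. by move=> nu nv; rewrite /nonneg -(addr0 0); apply: lev_add. Qed.

Lemma nonneg_scale k a (u : 'cV[R]_k) : 0 <= a -> nonneg u -> nonneg (a *: u).
Proof. by move=> a0 nu; rewrite /nonneg -(scaler0 _ a); apply: lev_scale. Qed.

Lemma lev_opp0 k (u : 'cV[R]_k) : lev (- u) 0 <-> nonneg u.
Proof. by split=> le i; have := le i; rewrite !mxE oppr_le0. Qed.

End ColumnVectors.

Section Optimization.
Variable R : realFieldType.

Lemma not_unbounded_min (X : Type) (F : X -> Prop) (f : X -> R) :
  ~ unbounded_min F f -> exists M, forall x, F x -> M <= f x.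
Proof.
move=> bndF; apply: NNPP => noM; apply: bndF => M; apply: NNPP => noX.
apply: noM; exists M => x Fx; rewrite leNgt; apply/negP => ltM.
by apply: noX; exists x.
Qed.

Lemma optimal_not_unbounded_max (X : Type) (F : X -> Prop) (f : X -> R) x :
  optimal_max F f x -> ~ unbounded_max F f.
Proof.
move=> [_ xmax] unbF; have [y [Fy]] := unbF (f x).
by rewrite ltNge xmax.
Qed.

Lemma unbounded_max_of_line (X : Type) (F : X -> Prop) (f : X -> R)
    (g : R -> X) (a e : R) :
  0 < e -> (forall s, 0 <= s -> F (g s) /\ f (g s) = a + s * e) ->
  unbounded_max F f.
Proof.
move=> e0 line M; pose s := (`|M - a| + 1) / e.
have s0 : 0 <= s by rewrite divr_ge0 ?ltW ?ltr_pwDr.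
exists (g s); have [Fgs ->] := line s s0; split=> //.
rewrite /s divfK ?gt_eqF //; have := ler_norm (M - a); lra.
Qed.

Lemma lp_attain_min (X : Type) (F : X -> Prop) (f : X -> R) N K
    (Q : 'M[R]_(K, N)) h c (enc : X -> 'cV[R]_N) (dec : 'cV[R]_N -> X) :
  (forall x, F x <-> lev (Q *m enc x) h) -> (forall x, f x = dotv c (enc x)) ->
  cancel dec enc -> feasible F -> ~ unbounded_min F f ->
  exists x, optimal_min F f x.
Proof.
move=> HF Hf decK [x0 Fx0] /not_unbounded_min[M geM].
have [|zs levzs zs_min] := lp_attain (c := c) (M := M) (proj1 (HF x0) Fx0).
  by move=> z levz; rewrite -(decK z) -Hf; apply/geM/HF; rewrite decK.
exists (dec zs); split=> [|x /HF levx]; first by apply/HF; rewrite decK.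
by rewrite !Hf decK; apply: zs_min.
Qed.

Lemma lp_attain_max (X : Type) (F : X -> Prop) (f : X -> R) N K
    (Q : 'M[R]_(K, N)) h c (enc : X -> 'cV[R]_N) (dec : 'cV[R]_N -> X) :
  (forall x, F x <-> lev (Q *m enc x) h) -> (forall x, f x = dotv c (enc x)) ->
  cancel dec enc -> feasible F -> ~ unbounded_max F f ->
  exists x, optimal_max F f x.
Proof.
move=> HF Hf decK feasF unbF.
have [|unbN|x [Fx xmin]] :=
  @lp_attain_min X F (fun x => - f x) N K Q h (- c) enc dec HF _ decK feasF.
- by move=> x; rewrite Hf dotvNl.
- apply: unbF => M; have [x [Fx ltM]] := unbN (- M).
  by exists x; split=> //; rewrite -ltrN2.
by exists x; split=> // y Fy; rewrite -lerN2; apply: xmin.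
Qed.

End Optimization.

Section Homogenization.
Variables (R : realFieldType) (V : lmodType R).
Variables (F : V -> Prop) (C : V -> R -> Prop) (f : V -> R).
Hypothesis F_C1 : forall x, F x <-> C x 1.
Hypothesis C_add : forall x y s t, C x s -> C y t -> C (x + y) (s + t).
Hypothesis C_scale : forall a x t, 0 <= a -> C x t -> C (a *: x) (a * t).
Hypothesis fD : forall x y, f (x + y) = f x + f y.
Hypothesis fZ : forall a x, f (a *: x) = a * f x.

Lemma homogeneous_mean x0 x w : F x0 -> 0 <= w -> C x w ->
  F ((1 + w)^-1 *: (x0 + x)) /\ f ((1 + w)^-1 *: (x0 + x)) = (f x0 + f x) / (1 + w).
Proof.
move=> /F_C1 Cx0 w0 Cx; have w1 : 0 < 1 + w by lra.
split; last by rewrite fZ fD mulrC.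
have inv_ge0 : 0 <= (1 + w)^-1 by rewrite invr_ge0 ltW.
by apply/F_C1; have := C_scale inv_ge0 (C_add Cx0 Cx); rewrite mulVf ?gt_eqF.
Qed.

Lemma homogeneous_min_bound x0 x w : optimal_min F f x0 -> 0 <= w -> C x w ->
  w * f x0 <= f x.
Proof.
move=> [Fx0 x0min] w0 Cx; have [Fmean fmean] := homogeneous_mean Fx0 w0 Cx.
by have := x0min _ Fmean; rewrite fmean ler_pdivlMr; lra.
Qed.

Lemma homogeneous_max_bound x0 x w : optimal_max F f x0 -> 0 <= w -> C x w ->
  f x <= w * f x0.
Proof.
move=> [Fx0 x0max] w0 Cx; have [Fmean fmean] := homogeneous_mean Fx0 w0 Cx.
by have := x0max _ Fmean; rewrite fmean ler_pdivrMr; lra.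
Qed.

End Homogenization.

Section Problem.
Variables (R : realFieldType) (m n1 n2 p l q r : nat).
Variables (D : LPdata R m n1 n2 p l q r) (xh : 'cV[R]_n1).

Definition S1_cone (z : S1var R n2 l q) (t : R) : Prop :=
  let: (y, upsi, v) := z in
  [/\ nonneg y, nonneg upsi, nonneg v,
      lev (t *: b D) (B D *m y - (Gpsi D)^T *m upsi - (Kpsi D)^T *m v)
    & lev ((Ks D)^T *m v) (t *: ones R r)].

Definition S2'_cone (z : S2'var R m p) (t : R) : Prop :=
  let: (psi, uy) := z in
  [/\ nonneg psi, nonneg uy & lev ((B D)^T *m psi + (Gy D)^T *m uy) (t *: cy D)].

Lemma S1_feas_cone z : S1_feas D z <-> S1_cone z 1.
Proof. by case: z => [[y u] v]; rewrite /S1_cone !scale1r. Qed.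

Lemma S2'_feas_cone z : S2'_feas D z <-> S2'_cone z 1.
Proof. by case: z => [psi uy]; rewrite /S2'_cone scale1r. Qed.

Lemma S1_cone_add z z' s t :
  S1_cone z s -> S1_cone z' t -> S1_cone (z + z') (s + t).
Proof.
case: z z' => [[y u] v] [[y' u'] v'] [ny nu nv lebz lekz] [ny' nu' nv' lebz' lekz'].
split; try exact: nonneg_add.
  move=> i; have := lebz i; have := lebz' i.
  by rewrite /= scalerDl !mulmxDr !mxE; lra.
by move=> i; have := lekz i; have := lekz' i; rewrite /= scalerDl !mulmxDr !mxE; lra.
Qed.

Lemma S1_cone_scale a z t : 0 <= a -> S1_cone z t -> S1_cone (a *: z) (a * t).
Proof.
case: z => [[y u] v] a0 [ny nu nv lebz lekz].
split; try exact: nonneg_scale.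
  by rewrite /= -scalerA -!scalemxAr -!scalerBr; apply: lev_scale.
by rewrite /= -scalerA -!scalemxAr; apply: lev_scale.
Qed.

Lemma S2'_cone_add z z' s t :
  S2'_cone z s -> S2'_cone z' t -> S2'_cone (z + z') (s + t).
Proof.
case: z z' => [psi uy] [psi' uy'] [npsi nuy lecz] [npsi' nuy' lecz'].
split; try exact: nonneg_add.
by move=> i; have := lecz i; have := lecz' i; rewrite /= scalerDl !mulmxDr !mxE; lra.
Qed.

Lemma S2'_cone_scale a z t : 0 <= a -> S2'_cone z t -> S2'_cone (a *: z) (a * t).
Proof.
case: z => [psi uy] a0 [npsi nuy lecz].
split; try exact: nonneg_scale.
by rewrite /= -scalerA -!scalemxAr -scalerDr; apply: lev_scale.
Qed.

Lemma S1_objD z z' : S1_obj D xh (z + z') = S1_obj D xh z + S1_obj D xh z'.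
Proof.
case: z z' => [[y u] v] [[y' u'] v'].
rewrite /S1_obj /= dotvDr !dotvDl; lra.
Qed.

Lemma S1_objZ a z : S1_obj D xh (a *: z) = a * S1_obj D xh z.
Proof. by case: z => [[y u] v]; rewrite /S1_obj /= dotvZr !dotvZl; lra. Qed.

Lemma S2'_objD z z' : S2'_obj D xh (z + z') = S2'_obj D xh z + S2'_obj D xh z'.
Proof. by case: z z' => [psi uy] [psi' uy']; rewrite /S2'_obj /= !dotvDl; lra. Qed.

Lemma S2'_objZ a z : S2'_obj D xh (a *: z) = a * S2'_obj D xh z.
Proof. by case: z => [psi uy]; rewrite /S2'_obj /= !dotvZl mulrDr. Qed.

Lemma S1_obj_ge z0 z w : optimal_min (S1_feas D) (S1_obj D xh) z0 ->
  0 <= w -> S1_cone z w -> w * S1_obj D xh z0 <= S1_obj D xh z.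
Proof.
move=> opt w0 Cz; exact: (homogeneous_min_bound S1_feas_cone S1_cone_add
  S1_cone_scale S1_objD S1_objZ opt w0 Cz).
Qed.

Lemma S2'_obj_le z0 z t : optimal_max (S2'_feas D) (S2'_obj D xh) z0 ->
  0 <= t -> S2'_cone z t -> S2'_obj D xh z <= t * S2'_obj D xh z0.
Proof.
move=> opt t0 Cz; exact: (homogeneous_max_bound S2'_feas_cone S2'_cone_add
  S2'_cone_scale S2'_objD S2'_objZ opt t0 Cz).
Qed.

Lemma S1_attain :
  feasible (S1_feas D) -> ~ unbounded_min (S1_feas D) (S1_obj D xh) ->
  exists z, optimal_min (S1_feas D) (S1_obj D xh) z.
Proof.
apply: (@lp_attain_min _ _ _ _ (n2 + (l + q)) (n2 + (l + (q + (m + r))))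
  (col_mx (row_mx (-1%:M) (row_mx 0 0)) (col_mx (row_mx 0 (row_mx (-1%:M) 0))
    (col_mx (row_mx 0 (row_mx 0 (-1%:M)))
    (col_mx (row_mx (- B D) (row_mx (Gpsi D)^T (Kpsi D)^T))
            (row_mx 0 (row_mx 0 (Ks D)^T))))))
  (col_mx 0 (col_mx 0 (col_mx 0 (col_mx (- b D) (ones R r)))))
  (col_mx (d D) (col_mx (- (hpsi D - Gxpsi D *m xh)) (- (k D + Kx D *m xh))))
  (fun z => let: (y, u, v) := z in col_mx y (col_mx u v))
  (fun z => (usubmx z, usubmx (dsubmx z), dsubmx (dsubmx z)))).
- move=> [[y u] v].
  rewrite !mul_col_mx !mul_row_col !mul0mx !add0r !addr0 !mulNmx !mul1mx.
  rewrite !lev_col !lev_opp0.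
  have lebE : lev (- (B D *m y) + ((Gpsi D)^T *m u + (Kpsi D)^T *m v)) (- b D) <->
           lev (b D) (B D *m y - (Gpsi D)^T *m u - (Kpsi D)^T *m v).
    by split=> le i; have := le i; rewrite !mxE; lra.
  rewrite lebE; split=> [[]|[? [? [? []]]]]; by do !split.
- move=> [[y u] v]; rewrite /S1_obj !dotv_col !dotvNl.
  by rewrite (dotvC (hpsi D - _)) (dotvC (k D + _)); lra.
- by move=> z /=; rewrite !vsubmxK.
Qed.

Lemma S2'_attain :
  feasible (S2'_feas D) -> ~ unbounded_max (S2'_feas D) (S2'_obj D xh) ->
  exists z, optimal_max (S2'_feas D) (S2'_obj D xh) z.
Proof.
apply: (@lp_attain_max _ _ _ _ (m + p) (m + (p + n2))
  (col_mx (row_mx (-1%:M) 0) (col_mx (row_mx 0 (-1%:M)) (row_mx (B D)^T (Gy D)^T)))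
  (col_mx 0 (col_mx 0 (cy D)))
  (col_mx (b D - A D *m xh) (hy D - Gxy D *m xh))
  (fun z => let: (psi, uy) := z in col_mx psi uy)
  (fun z => (usubmx z, dsubmx z))).
- move=> [psi uy].
  rewrite !mul_col_mx !mul_row_col !mul0mx !add0r !addr0 !mulNmx !mul1mx.
  rewrite !lev_col !lev_opp0.
  by split=> [[]|[? []]].
- by move=> [psi uy]; rewrite /S2'_obj dotv_col !(dotvC (_ - _)).
- by move=> z /=; rewrite vsubmxK.
Qed.

Definition P_join (z2 : S2'var R m p) (w : R) (z1 : S1var R n2 l q) :
    Pvar R m n2 p l q :=
  let: (psi, uy) := z2 in let: (y, upsi, v) := z1 in (psi, uy, w, y, upsi, v).

Lemma P_obj_join z2 w z1 :
  P_obj D xh (P_join z2 w z1) = S2'_obj D xh z2 - S1_obj D xh z1.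
Proof.
by case: z2 z1 => [psi uy] [[y u] v]; rewrite /P_obj /S2'_obj /S1_obj /=; lra.
Qed.

Lemma P_joinE psi uy w y upsi v :
  (psi, uy, w, y, upsi, v) = P_join (psi, uy) w (y, upsi, v).
Proof. by []. Qed.

Lemma S1_cone0 : S1_cone 0 0.
Proof. by split=> i; rewrite ?scale0r ?mulmx0 ?subr0 !mxE. Qed.

Lemma S1_obj0 : S1_obj D xh 0 = 0.
Proof. by have := S1_objZ 0 0; rewrite scale0r mul0r. Qed.

Lemma P_obj_join0 z2 : P_obj D xh (P_join z2 0 0) = S2'_obj D xh z2.
Proof. by rewrite P_obj_join S1_obj0 subr0. Qed.

Lemma S2_objE O z w :
  S2_obj D xh O (z, w) = S2'_obj D xh z - (if O is Some o then o * w else 0).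
Proof. by case: z. Qed.

Lemma S2_obj0 O z : S2_obj D xh O (z, 0) = S2'_obj D xh z.
Proof. by rewrite S2_objE; case: O => [o|]; rewrite ?mulr0 subr0. Qed.

Lemma S2_feas0 O z : S2'_feas D z -> S2_feas D O (z, 0).
Proof. by case: z => psi uy [npsi nuy lec]; split; rewrite ?scale0r ?add0r. Qed.

Lemma S2_unbounded_of_S2'_unbounded O :
  unbounded_max (S2'_feas D) (S2'_obj D xh) ->
  unbounded_max (S2_feas D O) (S2_obj D xh O).
Proof.
move=> unb M; have [z [feas gtM]] := unb M.
by exists (z, 0); rewrite S2_obj0; split=> //; apply: S2_feas0.
Qed.

Lemma S2_ray_of_S2'_ray O z : S2'_ray D xh z -> S2_ray D xh O (z, 0).
Proof.
case: z => psi uy [npsi nuy lec pos]; split; last by rewrite S2_obj0.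
by split; rewrite ?scale0r.
Qed.

Hypothesis d_cy : d D = cy D.

Lemma P_feas_join z2 w z1 :
  P_feas D (P_join z2 w z1) <-> [/\ 0 <= w, S2'_cone z2 (w + 1) & S1_cone z1 w].
Proof.
case: z2 z1 => [psi uy] [[y u] v].
rewrite /P_feas /S2'_cone /S1_cone /= d_cy scalerDl scale1r.
by split=> [[[? ? ? ? [? ?]] [? ? ?]]|[? [? ? ?] [? ? ? ? ?]]].
Qed.

Lemma S2_feasE O z w :
  S2_feas D O (z, w) <-> [/\ 0 <= w, O = None -> w = 0 & S2'_cone z (w + 1)].
Proof.
case: z => psi uy; rewrite /S2_feas /S2'_cone d_cy scalerDl scale1r.
by split=> [[? ? ? ? ?]|[? ? [? ? ?]]].
Qed.

Lemma S2_ray_of_gt o z : S2'_feas D z -> o < S2'_obj D xh z ->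
  S2_ray D xh (Some o) (z, 1).
Proof.
case: z => psi uy [npsi nuy lec] gto; split; first by split; rewrite ?scale1r ?d_cy.
by rewrite S2_objE mulr1 subr_gt0.
Qed.

Lemma S2_unbounded_of_gt o z : S2'_feas D z -> o < S2'_obj D xh z ->
  unbounded_max (S2_feas D (Some o)) (S2_obj D xh (Some o)).
Proof.
move=> /S2'_feas_cone Cz gto.
apply: (unbounded_max_of_line (g := fun s => ((1 + s) *: z, s))
  (a := S2'_obj D xh z) (e := S2'_obj D xh z - o)); first by rewrite subr_gt0.
move=> s s0; rewrite S2_objE S2'_objZ; split; last by lra.
apply/S2_feasE; split=> //.
by rewrite [s + 1]addrC -[X in S2'_cone _ X]mulr1; apply: S2'_cone_scale Cz; lra.
Qed.

Lemma S2_optimal_of_le O z2 : optimal_max (S2'_feas D) (S2'_obj D xh) z2 ->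
  ~ ext_gt (S2'_obj D xh z2) O ->
  optimal_max (S2_feas D O) (S2_obj D xh O) (z2, 0).
Proof.
move=> opt2 leO; split; first exact/S2_feas0/opt2.1.
move=> [z w] /S2_feasE[w0 wNone Cz]; rewrite S2_obj0 S2_objE.
have := S2'_obj_le opt2 (addr_ge0 w0 ler01) Cz.
case: O leO wNone => [o /= /negP|_ /(_ erefl) ->]; last by lra.
by rewrite -leNgt; nra.
Qed.

Lemma P_obj_le z1 z2 z w y :
  optimal_min (S1_feas D) (S1_obj D xh) z1 ->
  optimal_max (S2'_feas D) (S2'_obj D xh) z2 ->
  P_feas D (P_join z w y) ->
  P_obj D xh (P_join z w y) <= (w + 1) * S2'_obj D xh z2 - w * S1_obj D xh z1.
Proof.
move=> opt1 opt2 /P_feas_join[w0 Cz Cy]; rewrite P_obj_join.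
have := S1_obj_ge opt1 w0 Cy; have := S2'_obj_le opt2 (addr_ge0 w0 ler01) Cz.
lra.
Qed.

Lemma P_feas_join0 z2 : S2'_feas D z2 -> P_feas D (P_join z2 0 0).
Proof.
move=> /S2'_feas_cone C2; apply/P_feas_join; split=> //; last exact: S1_cone0.
by rewrite add0r.
Qed.

Lemma P_optimal_of_le z1 z2 :
  optimal_min (S1_feas D) (S1_obj D xh) z1 ->
  optimal_max (S2'_feas D) (S2'_obj D xh) z2 ->
  S2'_obj D xh z2 <= S1_obj D xh z1 ->
  optimal_max (P_feas D) (P_obj D xh) (P_join z2 0 0).
Proof.
move=> opt1 opt2 le21; split; first exact/P_feas_join0/opt2.1.
move=> [[[[[psi uy] w] y] upsi] v]; rewrite P_joinE => feas.
have /P_feas_join[w0 _ _] := feas.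
have := P_obj_le opt1 opt2 feas; rewrite P_obj_join0.
nra.
Qed.

Lemma P_unbounded_of_gt z1 z2 : S1_feas D z1 -> S2'_feas D z2 ->
  S1_obj D xh z1 < S2'_obj D xh z2 -> unbounded_max (P_feas D) (P_obj D xh).
Proof.
move=> /S1_feas_cone C1 /S2'_feas_cone C2 lt12.
apply: (unbounded_max_of_line (g := fun s => P_join ((1 + s) *: z2) s (s *: z1))
  (a := S2'_obj D xh z2) (e := S2'_obj D xh z2 - S1_obj D xh z1)).
  by rewrite subr_gt0.
move=> s s0; rewrite P_obj_join S2'_objZ S1_objZ; split; last by lra.
apply/P_feas_join; split=> //.
  by rewrite [s + 1]addrC -[X in S2'_cone _ X]mulr1; apply: S2'_cone_scale C2; lra.
by rewrite -[X in S1_cone _ X]mulr1; apply: S1_cone_scale C1.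
Qed.

Lemma P_unbounded_of_S1_unbounded : feasible (S2'_feas D) ->
  unbounded_min (S1_feas D) (S1_obj D xh) -> unbounded_max (P_feas D) (P_obj D xh).
Proof.
move=> [z2 /S2'_feas_cone C2] unb1 M.
have [z1 [/S1_feas_cone C1 lt1]] := unb1 (2 * S2'_obj D xh z2 - M).
exists (P_join ((1 + 1) *: z2) 1 z1); rewrite P_obj_join S2'_objZ.
split; last by lra.
apply/P_feas_join; split=> //.
by rewrite -[X in S2'_cone _ X]mulr1; apply: S2'_cone_scale C2; lra.
Qed.

Lemma P_unbounded_of_S2'_unbounded :
  unbounded_max (S2'_feas D) (S2'_obj D xh) -> unbounded_max (P_feas D) (P_obj D xh).
Proof.
move=> unb2 M; have [z2 [feas2 gtM]] := unb2 M.
by exists (P_join z2 0 0); rewrite P_obj_join0; split=> //; apply: P_feas_join0.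
Qed.

Section OptimalValue.
Variable O : option R.
Hypothesis O_S1 : forall o, O = Some o <-> opt_value_min (S1_feas D) (S1_obj D xh) o.

Lemma P_unbounded_iff : feasible (S1_feas D) -> feasible (S2'_feas D) ->
  unbounded_max (P_feas D) (P_obj D xh) <->
  [\/ unbounded_min (S1_feas D) (S1_obj D xh),
       unbounded_max (S2'_feas D) (S2'_obj D xh)
     | exists O2, opt_value_max (S2'_feas D) (S2'_obj D xh) O2 /\ ext_gt O2 O].
Proof.
move=> feas1 feas2; split=> [unbP|[unb1|unb2|[O2 [[z2 [opt2 <-]] gtO]]]].
- have [unb1|bnd1] := classic (unbounded_min (S1_feas D) (S1_obj D xh)).
    exact: Or31.
  have [unb2|bnd2] := classic (unbounded_max (S2'_feas D) (S2'_obj D xh)).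
    exact: Or32.
  have [z1 opt1] := S1_attain feas1 bnd1; have [z2 opt2] := S2'_attain feas2 bnd2.
  apply: Or33; exists (S2'_obj D xh z2); split; first by exists z2.
  have -> : O = Some (S1_obj D xh z1) by apply/O_S1; exists z1.
  rewrite /= ltNge; apply/negP => le21.
  exact: optimal_not_unbounded_max (P_optimal_of_le opt1 opt2 le21) unbP.
- exact: P_unbounded_of_S1_unbounded.
- exact: P_unbounded_of_S2'_unbounded.
- case: O O_S1 gtO => [o|//] hO /= gto.
  have [z1 [opt1 o_z1]] := (hO o).1 erefl; rewrite -o_z1 in gto.
  exact: P_unbounded_of_gt opt1.1 opt2.1 gto.
Qed.

Lemma P_optimal z2 : feasible (S1_feas D) ->
  ~ unbounded_min (S1_feas D) (S1_obj D xh) ->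
  optimal_max (S2'_feas D) (S2'_obj D xh) z2 -> ~ ext_gt (S2'_obj D xh z2) O ->
  optimal_max (P_feas D) (P_obj D xh) (P_join z2 0 0).
Proof.
move=> feas1 bnd1 opt2 leO; have [z1 opt1] := S1_attain feas1 bnd1.
have eO : O = Some (S1_obj D xh z1) by apply/O_S1; exists z1.
by apply: P_optimal_of_le opt1 opt2 _; rewrite leNgt; apply/negP; rewrite eO in leO.
Qed.

End OptimalValue.

End Problem.

Theorem corollary2 (R : realFieldType) (m n1 n2 p l q r : nat)
    (D : LPdata R m n1 n2 p l q r) (xh : 'cV[R]_n1) (O : option R) :
  d D = cy D ->
  feasible (S1_feas D) ->
  feasible (S2'_feas D) ->
  (* O is the optimal value of (S1') if finite, and +oo (None) otherwise *)
  (forall o, O = Some o <-> opt_value_min (S1_feas D) (S1_obj D xh) o) ->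
  (* (S2') unbounded with ray (psi~, u_y~): (psi~, u_y~, 0) is an unbounded ray of (S2) *)
  (unbounded_max (S2'_feas D) (S2'_obj D xh) ->
     unbounded_max (S2_feas D O) (S2_obj D xh O)) /\
  (forall psit uyt, S2'_ray D xh (psit, uyt) -> S2_ray D xh O (psit, uyt, 0)) /\
  (* (S2') has finite optimum O2 > O at (psi^, u_y^): (S2) unbounded with ray (psi^, u_y^, 1) *)
  (forall psih uyh, optimal_max (S2'_feas D) (S2'_obj D xh) (psih, uyh) ->
     ext_gt (S2'_obj D xh (psih, uyh)) O ->
     unbounded_max (S2_feas D O) (S2_obj D xh O) /\ S2_ray D xh O (psih, uyh, 1)) /\
  (* (S2') has finite optimum O2 <= O at (psi^, u_y^): (psi^, u_y^, 0) optimal for (S2), value O2 *)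
  (forall psih uyh, optimal_max (S2'_feas D) (S2'_obj D xh) (psih, uyh) ->
     ~ ext_gt (S2'_obj D xh (psih, uyh)) O ->
     optimal_max (S2_feas D O) (S2_obj D xh O) (psih, uyh, 0) /\
     S2_obj D xh O (psih, uyh, 0) = S2'_obj D xh (psih, uyh)) /\
  (* consequences for (P') *)
  (unbounded_max (P_feas D) (P_obj D xh) <->
     [\/ unbounded_min (S1_feas D) (S1_obj D xh),
         unbounded_max (S2'_feas D) (S2'_obj D xh)
       | exists O2, opt_value_max (S2'_feas D) (S2'_obj D xh) O2 /\ ext_gt O2 O]) /\
  (forall psih uyh, ~ unbounded_min (S1_feas D) (S1_obj D xh) ->
     optimal_max (S2'_feas D) (S2'_obj D xh) (psih, uyh) ->
     ~ ext_gt (S2'_obj D xh (psih, uyh)) O ->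
     optimal_max (P_feas D) (P_obj D xh) (psih, uyh, 0, 0, 0, 0) /\
     P_obj D xh (psih, uyh, 0, 0, 0, 0) = S2'_obj D xh (psih, uyh)).
Proof.
move=> d_cy feas1 feas2 O_S1.
split; first exact: S2_unbounded_of_S2'_unbounded.
split; first by move=> psi uy; apply: S2_ray_of_S2'_ray.
split.
  move=> psi uy [feas _]; case: O {O_S1} => [o|] gto; last by case: gto.
  by split; [apply: (S2_unbounded_of_gt d_cy feas) | apply: S2_ray_of_gt feas _].
split.
  by move=> psi uy opt leO; split; [apply: S2_optimal_of_le | apply: S2_obj0].
split; first exact: P_unbounded_iff.
move=> psi uy bnd1 opt leO; split; last exact: (P_obj_join0 _ _ (psi, uy)).
exact: (P_optimal d_cy O_S1 (z2 := (psi, uy))).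
Qed.
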